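(* Fix integers $2\le r\le k$, a constant $\lambda_{k-r+1}\in\mathbb R$ and a constant $\tau>0$, and let $u(n)$ satisfy $u(n)\to\infty$, $u(n)/n\to0$. Let $t=t(n)$ be integers with $0\le t\le\tau u(n)$, and define $\lambda^{(s)}_j$ as below. Then for every $j\in\{k-r+1,\dots,k\}$, $$\exp\{\lambda^{(t)}_j\}=1+\binom{j}{k-r+1}\frac{t^{\,j-k+r-1}}{n^{\,j-k+r-1}}\bigl(e^{\lambda_{k-r+1}}-1\bigr)+O\Bigl(\frac{u(n)^{j-k+r-2}}{n^{j-k+r-1}}\max\Bigl\{1,\frac{u(n)^2}{n}\Bigr\}\Bigr),$$ where the implied constant depends only on $k,r,\lambda_{k-r+1},\tau$.
   Context: Let $N(s):=n-u(n)-s$. Set $\lambda^{(s)}_{k-r+1}:=\lambda_{k-r+1}$ for all $s=0,1,\dots,t$. For $j=k-r+2,\dots,k$ set $\lambda^{(0)}_j:=0$ and, for $s=1,\dots,t$, $$\lambda^{(s)}_j:=\lambda^{(s-1)}_j+\log\Bigl(1-\frac{j}{N(t-s+1)}+\frac{j}{N(t-s+1)}\exp\{\lambda^{(s-1)}_{j-1}\}\Bigr).$$ *)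

From Stdlib Require Import Reals Lra Lia Arith.
Open Scope R_scope.

Definition Nval (n un s : nat) : R := INR n - INR un - INR s.

(* lam_iter k r n un t lam s j  =  lambda^{(s)}_j, for the data
   n, u(n) = un, t = t(n), lambda_{k-r+1} = lam.
   lambda^{(s)}_{k-r+1} = lam for all s;
   lambda^{(0)}_j = 0 for j > k-r+1;
   lambda^{(s)}_j = lambda^{(s-1)}_j
       + ln(1 - j/N(t-s+1) + j/N(t-s+1) * exp(lambda^{(s-1)}_{j-1})).
   Values for j < k-r+1 are irrelevant and set to 0. *)
Fixpoint lam_iter (k r n un t : nat) (lam : R) (s j : nat) : R :=
  if Nat.eqb j (k - r + 1) then lam
  else if Nat.ltb (k - r + 1) j then
    match s with
    | O => 0
    | S s' =>
        let Nv := Nval n un (t - s') in   (* N(t - s + 1) with s = s'+1 *)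
        lam_iter k r n un t lam s' j
        + ln (1 - INR j / Nv + INR j / Nv * exp (lam_iter k r n un t lam s' (j - 1)))
    end
  else 0.

(* Writing Y_s(d) := exp(lambda^(s)_(k-r+1+d)) - 1 and j := k-r+2+d, the definition
   becomes the recursion
     Y_(s+1)(d+1) = Y_s(d+1) + j / N_s * (1 + Y_s(d+1)) * Y_s(d),
     Y_s(0) = e^lambda - 1,   Y_0(d+1) = 0,
   a perturbation of the linear recursion solved exactly by the main term
   C(k-r+1+d, k-r+1) (s/n)^d (e^lambda - 1).  Induction on d and then on s first gives
   the crude bound |Y_s(d)| = O((u/n)^d).  Feeding it back, each step s -> s+1 adds
   O(u^(d-1) n^(-d-1) max(1, u^2/n)) to the distance from the main term (from replacing
   N_s by n, from the quadratic term, from the error one level down, and from the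
   binomial defect of (s+1)^(d+1)); summing over the t = O(u) steps gives the claim. *)

From Stdlib Require Import Reals Lra Lia Arith Binomial.
Open Scope R_scope.

Lemma pow_le1 (x : R) (n : nat) : 0 <= x <= 1 -> x ^ n <= 1.
Proof. intros Hx. rewrite <- (pow1 n). apply pow_incr. lra. Qed.

Definition binom_defect (e : nat) (z : R) : R :=
  (z + 1) ^ S (S e) - z ^ S (S e) - INR (S (S e)) * z ^ S e.

Lemma binom_defect_bounds (e : nat) (z : R) : 0 <= z ->
  0 <= binom_defect e z <= INR (S (S e)) ^ 2 * (z + 1) ^ e.
Proof.
  intros Hz. induction e as [|e [IH0 IH1]].
  - unfold binom_defect. simpl. nra.
  - assert (Hrec : binom_defect (S e) z
                   = (z + 1) * binom_defect e z + INR (S (S e)) * z ^ S e).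
    { unfold binom_defect. rewrite !S_INR. simpl. ring. }
    rewrite Hrec, (S_INR (S (S e))).
    set (K := INR (S (S e))) in *. assert (0 <= K) by apply pos_INR.
    assert (Hz1 : z ^ S e <= (z + 1) ^ S e) by (apply pow_incr; lra).
    assert (0 <= z ^ S e) by (apply pow_le; lra).
    assert (Hpow : (z + 1) ^ S e = (z + 1) * (z + 1) ^ e) by reflexivity.
    assert (0 <= (z + 1) ^ e) by (apply pow_le; lra).
    assert ((z + 1) * binom_defect e z <= (z + 1) * (K ^ 2 * (z + 1) ^ e))
      by (apply Rmult_le_compat_l; lra).
    assert (K * z ^ S e <= K * (z + 1) ^ S e) by (apply Rmult_le_compat_l; lra).
    split; nra.
Qed.

Lemma C_succ_mul (m d : nat) :
  INR (m + S d) * C (m + d) m = INR (S d) * C (m + S d) m.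
Proof.
  unfold C.
  replace (m + S d - m)%nat with (S d) by lia.
  replace (m + d - m)%nat with d by lia.
  replace (m + S d)%nat with (S (m + d)) by lia.
  rewrite !fact_simpl, !mult_INR.
  pose proof (INR_fact_lt_0 d); pose proof (INR_fact_lt_0 m).
  pose proof (INR_fact_lt_0 (m + d)).
  assert (0 < INR (S d)) by (apply lt_0_INR; lia).
  field. lra.
Qed.

Lemma C_diag (m : nat) : C m m = 1.
Proof.
  unfold C. rewrite Nat.sub_diag. simpl.
  pose proof (INR_fact_lt_0 m). field. lra.
Qed.

Lemma C_le_fact (n p k : nat) : (p <= n)%nat -> (n <= k)%nat ->
  0 <= C n p <= INR (fact k).
Proof.
  intros Hp Hk. unfold C.
  assert (1 <= INR (fact p)) by (apply (le_INR 1); apply lt_O_fact).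
  assert (1 <= INR (fact (n - p))) by (apply (le_INR 1); apply lt_O_fact).
  assert (INR (fact n) <= INR (fact k)) by (apply le_INR, fact_le; exact Hk).
  pose proof (INR_fact_lt_0 n).
  assert (Hinv : 0 < / (INR (fact p) * INR (fact (n - p))) <= 1).
  { split. apply Rinv_0_lt_compat; nra.
    rewrite <- Rinv_1. apply Rinv_le_contravar; nra. }
  unfold Rdiv. split; nra.
Qed.

Lemma exp_add_ln_mix (a b q : R) : 0 <= q <= 1 ->
  exp (a + ln (1 - q + q * exp b)) = exp a * (1 + q * (exp b - 1)).
Proof.
  intros Hq. pose proof (exp_pos b).
  assert (0 < 1 - q + q * exp b).
  { destruct (Req_dec q 0) as [->|Hq0]; [lra|]. nra. }
  rewrite exp_plus, exp_ln by lra. ring.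
Qed.

Section Constants.
Variables (k : nat) (tau c : R).
Hypothesis Htau : 0 <= tau.

Let k_nonneg : 0 <= INR k.
Proof. apply pos_INR. Qed.

Definition crude_const (d : nat) : R := (4 * INR k * tau + 1) ^ d * (Rabs c + 1).

Definition defect_const : R := INR (fact k) * Rabs c * INR k ^ 2 * (tau + 1) ^ k.

(* One summand for each perturbation term bounded in the induction step of [Y_fine]. *)
Fixpoint fine_const (d : nat) : R :=
  match d with
  | O => 0
  | S d' => 2 * INR k * (1 + tau) * crude_const d'
            + 2 * INR k * crude_const (S d') * crude_const d'
            + (INR k * tau + 1) * fine_const d' + defect_const
  end.

Lemma crude_const_S d : crude_const (S d) = (4 * INR k * tau + 1) * crude_const d.
Proof. unfold crude_const. simpl. ring. Qed.

Lemma crude_const_pos d : 0 < crude_const d.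
Proof.
  unfold crude_const. pose proof (Rabs_pos c).
  apply Rmult_lt_0_compat; [apply pow_lt|]; nra.
Qed.

Lemma crude_const_mono d e : (d <= e)%nat -> crude_const d <= crude_const e.
Proof.
  intros H. unfold crude_const. apply Rmult_le_compat_r; [pose proof (Rabs_pos c); lra|].
  apply Rle_pow; [nra | exact H].
Qed.

Lemma defect_const_nonneg : 0 <= defect_const.
Proof.
  unfold defect_const. pose proof (pos_INR (fact k)); pose proof (Rabs_pos c).
  assert (0 <= (tau + 1) ^ k) by (apply pow_le; lra).
  assert (0 <= INR k ^ 2) by (apply pow_le; lra).
  apply Rmult_le_pos; [apply Rmult_le_pos; [apply Rmult_le_pos|]|]; lra.
Qed.

Lemma fine_const_step d : 0 <= fine_const d -> fine_const d <= fine_const (S d).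
Proof.
  intros HG. cbn [fine_const].
  pose proof (crude_const_pos d); pose proof (crude_const_pos (S d)).
  pose proof defect_const_nonneg.
  assert (0 <= 2 * INR k * (1 + tau) * crude_const d) by (apply Rmult_le_pos; nra).
  assert (0 <= 2 * INR k * crude_const (S d) * crude_const d) by (apply Rmult_le_pos; nra).
  assert (0 <= INR k * tau * fine_const d) by (apply Rmult_le_pos; nra).
  nra.
Qed.

Lemma fine_const_nonneg d : 0 <= fine_const d.
Proof.
  induction d as [|d IH]; [simpl; lra|].
  eapply Rle_trans; [exact IH | apply fine_const_step, IH].
Qed.

Lemma fine_const_mono d e : (d <= e)%nat -> fine_const d <= fine_const e.
Proof.
  induction 1 as [|e _ IH]; [lra|].
  eapply Rle_trans; [exact IH | apply fine_const_step, fine_const_nonneg].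
Qed.

End Constants.

Section Recursion.
Variables (k m t : nat) (tau c U N : R) (Y : nat -> nat -> R) (Ns : nat -> R).
Hypothesis Htau : 0 < tau.
Hypothesis HU : 1 <= U.
Hypothesis HUN : U <= N.
Hypothesis Ht : INR t <= tau * U.
Hypothesis HNs : forall s, (s < t)%nat ->
  N / 2 <= Ns s /\ Ns s <= N /\ N - Ns s <= (1 + tau) * U.
Hypothesis HY_base : forall s, Y s 0%nat = c.
Hypothesis HY_init : forall d, Y 0%nat (S d) = 0.
Hypothesis HY_succ : forall s d, (s < t)%nat -> (m + S d <= k)%nat ->
  Y (S s) (S d) = Y s (S d) + INR (m + S d) / Ns s * (1 + Y s (S d)) * Y s d.

Local Notation A := (crude_const k tau c).
Local Notation F := (defect_const k tau c).
Local Notation G := (fine_const k tau c).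

Hypothesis Hsmall : 4 * INR k * tau * A k * U <= N.

Let tau_nonneg : 0 <= tau.
Proof. lra. Qed.

Let x := U / N.
Let M := Rmax 1 (U ^ 2 / N).

Let N_pos : 0 < N.
Proof. lra. Qed.

Let x_pos : 0 < x.
Proof. unfold x. apply Rdiv_lt_0_compat; lra. Qed.

Let x_le1 : x <= 1.
Proof. unfold x. apply Rmult_le_reg_r with N; [lra|]. field_simplify; lra. Qed.

Let k_nonneg : 0 <= INR k.
Proof. apply pos_INR. Qed.

Let x_small : 4 * INR k * tau * A k * x <= 1.
Proof.
  unfold x. replace (4 * INR k * tau * A k * (U / N))
    with ((4 * INR k * tau * A k * U) / N) by (field; lra).
  apply Rmult_le_reg_r with N; [lra|]. field_simplify; lra.
Qed.

Let ratio_bound s j : (s < t)%nat -> (j <= k)%nat -> 0 <= INR j / Ns s <= 2 * INR k / N.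
Proof.
  intros Hs Hj. destruct (HNs s Hs) as [H1 [H2 H3]].
  assert (INR j <= INR k) by (apply le_INR; exact Hj).
  assert (0 <= INR j) by apply pos_INR.
  split.
  - apply Rmult_le_pos; [lra | left; apply Rinv_0_lt_compat; lra].
  - apply Rle_trans with (INR k / Ns s).
    + apply Rmult_le_compat_r; [left; apply Rinv_0_lt_compat|]; lra.
    + replace (2 * INR k / N) with (INR k / (N / 2)) by (field; lra).
      apply Rmult_le_compat_l; [lra|]. apply Rinv_le_contravar; lra.
Qed.

Let kappa d := 4 * INR k / N * A d * x ^ d.

Let kappa_nonneg d : 0 <= kappa d.
Proof.
  unfold kappa. pose proof (crude_const_pos k tau c tau_nonneg d).
  assert (0 <= x ^ d) by (apply pow_le; lra).
  apply Rmult_le_pos; [|lra]. apply Rmult_le_pos; [|lra].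
  apply Rmult_le_pos; [lra | left; apply Rinv_0_lt_compat; lra].
Qed.

Let step_budget d : (d <= k)%nat ->
  INR t * kappa d <= 4 * INR k * tau * A d * x ^ S d <= 1.
Proof.
  intros Hd.
  assert (Hxd : 0 <= x ^ d <= 1) by (split; [apply pow_le | apply pow_le1]; lra).
  pose proof (crude_const_pos k tau c tau_nonneg d).
  assert (A d <= A k) by (apply (crude_const_mono k tau c tau_nonneg); lia).
  pose proof (kappa_nonneg d).
  split.
  - apply Rle_trans with (tau * U * kappa d); [apply Rmult_le_compat_r; lra|].
    unfold kappa, x. cbn [pow]. right. field. lra.
  - cbn [pow]. assert (x * x ^ d <= x) by nra.
    assert (0 <= 4 * INR k * tau) by nra.
    apply Rle_trans with (4 * INR k * tau * A k * x); [|exact x_small].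
    apply Rle_trans with (4 * INR k * tau * A k * (x * x ^ d)).
    + apply Rmult_le_compat_r; [nra|]. apply Rmult_le_compat_l; lra.
    + apply Rmult_le_compat_l; [nra | lra].
Qed.

(* While |Y s (S d)| <= 1, each step adds at most kappa d, and the budget
   t * kappa d <= 1 keeps this invariant. *)
Let Y_crude_succ d : (m + S d <= k)%nat ->
  (forall s, (s <= t)%nat -> Rabs (Y s d) <= A d * x ^ d) ->
  forall s, (s <= t)%nat -> Rabs (Y s (S d)) <= INR s * kappa d.
Proof.
  intros Hd IH.
  destruct (step_budget d ltac:(lia)) as [Hbudget Hbudget1].
  pose proof (kappa_nonneg d).
  intros s; induction s as [|s IHs]; intros Hs.
  - rewrite HY_init, Rabs_R0. simpl. lra.
  - assert (Hst : (s < t)%nat) by lia.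
    specialize (IHs ltac:(lia)).
    rewrite (HY_succ s d Hst Hd).
    assert (INR s * kappa d <= INR t * kappa d)
      by (apply Rmult_le_compat_r; [lra | apply le_INR; lia]).
    destruct (ratio_bound s (m + S d) Hst Hd) as [F1 F2].
    assert (Hy := IH s ltac:(lia)).
    assert (Hone : Rabs (1 + Y s (S d)) <= 2).
    { eapply Rle_trans; [apply Rabs_triang|]. rewrite Rabs_R1. lra. }
    assert (Hstep : Rabs (INR (m + S d) / Ns s * (1 + Y s (S d)) * Y s d) <= kappa d).
    { rewrite !Rabs_mult, (Rabs_right (INR (m + S d) / Ns s)) by lra.
      replace (kappa d) with (2 * INR k / N * 2 * (A d * x ^ d)) by (unfold kappa; field; lra).
      apply Rmult_le_compat; [| apply Rabs_pos | | exact Hy].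
      - apply Rmult_le_pos; [lra | apply Rabs_pos].
      - apply Rmult_le_compat; [lra | apply Rabs_pos | lra | exact Hone]. }
    rewrite S_INR. eapply Rle_trans; [apply Rabs_triang|]. lra.
Qed.

Lemma Y_crude d : (m + d <= k)%nat -> forall s, (s <= t)%nat ->
  Rabs (Y s d) <= A d * x ^ d.
Proof.
  induction d as [|d IH]; intros Hd s Hs.
  - rewrite HY_base. unfold crude_const. simpl. lra.
  - assert (Hs' := Y_crude_succ d Hd (IH ltac:(lia)) s Hs).
    destruct (step_budget d ltac:(lia)) as [Hbudget _].
    assert (INR s <= INR t) by (apply le_INR; exact Hs).
    pose proof (kappa_nonneg d).
    assert (0 <= A d * x ^ S d).
    { pose proof (crude_const_pos k tau c tau_nonneg d).
      apply Rmult_le_pos; [lra | apply pow_le; lra]. }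
    rewrite crude_const_S. nra.
Qed.

Definition main_term (d s : nat) : R := C (m + d) m * c * (INR s / N) ^ d.

(* err_scale d = u^(d-2) n^(-d) max(1, u^2/n): the error added at level d per step,
   up to the constant fine_const. *)
Definition err_scale (d : nat) : R := x ^ d * M / U ^ 2.

Let M_ge1 : 1 <= M.
Proof. apply Rmax_l. Qed.

Lemma err_scale_nonneg d : 0 <= err_scale d.
Proof.
  unfold err_scale. apply Rmult_le_pos.
  - apply Rmult_le_pos; [apply pow_le|]; lra.
  - left; apply Rinv_0_lt_compat, pow_lt; lra.
Qed.

Lemma err_scale_S d : err_scale (S d) = x * err_scale d.
Proof. unfold err_scale. simpl. field. lra. Qed.

Let xpow_div_le d : x ^ S d / N <= err_scale (S d).
Proof.
  unfold err_scale.
  replace (x ^ S d * M / U ^ 2) with (x ^ S d * (M / U ^ 2)) by (field; lra).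
  apply Rmult_le_compat_l; [apply pow_le; lra|].
  apply Rmult_le_reg_l with (U ^ 2); [nra|].
  replace (U ^ 2 * (M / U ^ 2)) with M by (field; lra).
  replace (U ^ 2 * / N) with (U ^ 2 / N) by reflexivity. apply Rmax_r.
Qed.

(* The main term solves the linearised recursion up to the defect of the
   binomial expansion of (s + 1)^(d+1). *)
Lemma main_term_defect_eq d s :
  INR (m + S d) / N * main_term d s - (main_term (S d) (S s) - main_term (S d) s)
  = - (C (m + S d) m * c * (/ N) ^ S d)
    * ((INR s + 1) ^ S d - INR s ^ S d - INR (S d) * INR s ^ d).
Proof.
  assert (Hb := C_succ_mul m d). unfold main_term. rewrite (S_INR s).
  unfold Rdiv. rewrite !Rpow_mult_distr.
  transitivity ((/ N) ^ S d * c * INR s ^ d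
                * (INR (m + S d) * C (m + d) m - INR (S d) * C (m + S d) m)
                - C (m + S d) m * c * (/ N) ^ S d
                  * ((INR s + 1) ^ S d - INR s ^ S d - INR (S d) * INR s ^ d)).
  - cbn [pow]. ring.
  - rewrite Hb. ring.
Qed.

Let binom_defect_le e s : (s < t)%nat -> (S (S e) <= k)%nat ->
  0 <= binom_defect e (INR s) <= INR k ^ 2 * ((tau + 1) ^ k * U ^ e).
Proof.
  intros Hs He.
  set (z := INR s). assert (Hz : 0 <= z) by apply pos_INR.
  assert (Hz1 : z + 1 <= (tau + 1) * U).
  { unfold z. rewrite <- S_INR. apply Rle_trans with (INR t); [apply le_INR; lia | lra]. }
  destruct (binom_defect_bounds e z Hz) as [F0 F1].
  assert (Hzpow : (z + 1) ^ e <= (tau + 1) ^ k * U ^ e).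
  { apply Rle_trans with (((tau + 1) * U) ^ e); [apply pow_incr; lra|].
    rewrite Rpow_mult_distr. apply Rmult_le_compat_r; [apply pow_le; lra|].
    apply Rle_pow; [lra | lia]. }
  assert (Hk2 : INR (S (S e)) ^ 2 <= INR k ^ 2)
    by (apply pow_incr; split; [apply pos_INR | apply le_INR; lia]).
  split; [exact F0|]. eapply Rle_trans; [exact F1|].
  apply Rmult_le_compat; [apply pow_le, pos_INR | apply pow_le; lra | exact Hk2 | exact Hzpow].
Qed.

Lemma main_term_defect_bound d s : (s < t)%nat -> (m + S d <= k)%nat ->
  Rabs (INR (m + S d) / N * main_term d s - (main_term (S d) (S s) - main_term (S d) s))
  <= F * err_scale (S d).
Proof.
  intros Hs Hd. rewrite main_term_defect_eq.
  assert (0 <= F * err_scale (S d))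
    by (apply Rmult_le_pos; [apply (defect_const_nonneg k tau c tau_nonneg) | apply err_scale_nonneg]).
  destruct d as [|e].
  - replace ((INR s + 1) ^ 1 - INR s ^ 1 - INR 1 * INR s ^ 0) with 0 by (simpl; ring).
    rewrite Rmult_0_r, Rabs_R0. lra.
  - fold (binom_defect e (INR s)).
    destruct (binom_defect_le e s Hs ltac:(lia)) as [D0 D1].
    destruct (C_le_fact (m + S (S e)) m k ltac:(lia) Hd) as [C0 C1].
    assert (0 <= (/ N) ^ S (S e)) by (apply pow_le; left; apply Rinv_0_lt_compat; lra).
    pose proof (Rabs_pos c); pose proof (pos_INR (fact k)).
    set (Q := INR (fact k) * Rabs c * (/ N) ^ S (S e) * (INR k ^ 2 * ((tau + 1) ^ k * U ^ e))).
    assert (HQ : 0 <= Q).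
    { unfold Q. apply Rmult_le_pos; [apply Rmult_le_pos; [apply Rmult_le_pos|]|]; lra. }
    assert (HQM : F * err_scale (S (S e)) = Q * M).
    { unfold defect_const, err_scale, Q, x. unfold Rdiv. rewrite Rpow_mult_distr.
      cbn [pow]. field. lra. }
    rewrite HQM. apply Rle_trans with Q; [|nra].
    rewrite Rabs_mult, Rabs_Ropp, !Rabs_mult.
    rewrite (Rabs_right (C _ _)), (Rabs_right ((/ N) ^ _)), (Rabs_right (binom_defect _ _))
      by lra.
    unfold Q.
    apply Rmult_le_compat; [apply Rmult_le_pos; [apply Rmult_le_pos|]; lra | lra | | exact D1].
    apply Rmult_le_compat_r; [lra|]. apply Rmult_le_compat_r; lra.
Qed.

Section TermBounds.
Variables (s d : nat).
Hypothesis Hs : (s < t)%nat.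
Hypothesis Hd : (m + S d <= k)%nat.

Let j := INR (m + S d).

Let j_le_k : 0 <= j <= INR k.
Proof. split; [apply pos_INR | apply le_INR; exact Hd]. Qed.

Lemma shift_term_bound :
  Rabs ((j / Ns s - j / N) * Y s d)
  <= 2 * INR k * (1 + tau) * A d * err_scale (S d).
Proof.
  destruct (HNs s Hs) as [N1 [N2 N3]].
  assert (Hy := Y_crude d ltac:(lia) s ltac:(lia)).
  assert (E : j / Ns s - j / N = j * (N - Ns s) * / (Ns s * N)) by (field; lra).
  assert (D0 : 0 <= j * (N - Ns s) * / (Ns s * N)).
  { apply Rmult_le_pos; [nra | left; apply Rinv_0_lt_compat; nra]. }
  assert (D1 : j * (N - Ns s) * / (Ns s * N) <= INR k * ((1 + tau) * U) * / (N / 2 * N)).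
  { apply Rmult_le_compat; [nra | left; apply Rinv_0_lt_compat; nra | |].
    - apply Rmult_le_compat; lra.
    - apply Rinv_le_contravar; nra. }
  rewrite Rabs_mult, E, (Rabs_right (j * _ * _)) by lra.
  apply Rle_trans with (INR k * ((1 + tau) * U) * / (N / 2 * N) * (A d * x ^ d)).
  { apply Rmult_le_compat; [lra | apply Rabs_pos | exact D1 | exact Hy]. }
  replace (INR k * ((1 + tau) * U) * / (N / 2 * N) * (A d * x ^ d))
    with (2 * INR k * (1 + tau) * A d * (x ^ S d / N))
    by (unfold x; cbn [pow]; field; lra).
  pose proof (crude_const_pos k tau c tau_nonneg d).
  apply Rmult_le_compat_l; [apply Rmult_le_pos; nra | apply xpow_div_le].
Qed.

Lemma product_term_bound :
  Rabs (j / Ns s * Y s (S d) * Y s d)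
  <= 2 * INR k * A (S d) * A d * err_scale (S d).
Proof.
  destruct (ratio_bound s (m + S d) Hs Hd) as [F0 F1]. fold j in F0, F1.
  assert (Hy1 := Y_crude (S d) Hd s ltac:(lia)).
  assert (Hy0 := Y_crude d ltac:(lia) s ltac:(lia)).
  assert (Hxd : 0 <= x ^ d <= 1) by (split; [apply pow_le | apply pow_le1]; lra).
  pose proof (crude_const_pos k tau c tau_nonneg d); pose proof (crude_const_pos k tau c tau_nonneg (S d)).
  rewrite !Rabs_mult, (Rabs_right (j / Ns s)) by lra.
  apply Rle_trans with (2 * INR k / N * (A (S d) * x ^ S d) * A d).
  { apply Rmult_le_compat; [apply Rmult_le_pos; [lra | apply Rabs_pos] | apply Rabs_pos | |].
    - apply Rmult_le_compat; [lra | apply Rabs_pos | exact F1 | exact Hy1].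
    - eapply Rle_trans; [exact Hy0 | nra]. }
  replace (2 * INR k / N * (A (S d) * x ^ S d) * A d)
    with (2 * INR k * A (S d) * A d * (x ^ S d / N)) by (field; lra).
  apply Rmult_le_compat_l; [apply Rmult_le_pos; nra | apply xpow_div_le].
Qed.

Lemma lower_error_term_bound :
  Rabs (Y s d - main_term d s) <= INR s * G d * err_scale d ->
  Rabs (j / N * (Y s d - main_term d s)) <= INR k * tau * G d * err_scale (S d).
Proof.
  intros IH.
  assert (INR s <= tau * U) by (apply Rle_trans with (INR t); [apply le_INR; lia | exact Ht]).
  assert (0 <= INR s) by apply pos_INR.
  pose proof (fine_const_nonneg k tau c tau_nonneg d); pose proof (err_scale_nonneg d).
  rewrite Rabs_mult, (Rabs_right (j / N)) by (apply Rle_ge, Rmult_le_pos; [lra | left; apply Rinv_0_lt_compat; lra]).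
  apply Rle_trans with (INR k / N * (tau * U * G d * err_scale d)).
  - apply Rmult_le_compat; [apply Rmult_le_pos; [lra | left; apply Rinv_0_lt_compat; lra] | apply Rabs_pos | |].
    + apply Rmult_le_compat_r; [left; apply Rinv_0_lt_compat|]; lra.
    + eapply Rle_trans; [exact IH|]. apply Rmult_le_compat_r; [lra|]. apply Rmult_le_compat_r; lra.
  - rewrite err_scale_S. unfold x. right. field. lra.
Qed.

End TermBounds.

Lemma Y_fine d : (m + d <= k)%nat -> forall s, (s <= t)%nat ->
  Rabs (Y s d - main_term d s) <= INR s * G d * err_scale d.
Proof.
  induction d as [|d IH]; intros Hd s Hs.
  - rewrite HY_base. unfold main_term. rewrite Nat.add_0_r, C_diag.
    replace (c - 1 * c * (INR s / N) ^ 0) with 0 by (simpl; ring).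
    rewrite Rabs_R0. simpl fine_const. lra.
  - induction s as [|s IHs].
    + rewrite HY_init. unfold main_term.
      replace (0 - C (m + S d) m * c * (INR 0 / N) ^ S d) with 0
        by (cbn [pow INR]; unfold Rdiv; ring).
      rewrite Rabs_R0. simpl INR. lra.
    + assert (Hst : (s < t)%nat) by lia.
      specialize (IHs ltac:(lia)).
      rewrite (HY_succ s d Hst Hd).
      set (j := INR (m + S d)).
      replace (Y s (S d) + j / Ns s * (1 + Y s (S d)) * Y s d - main_term (S d) (S s))
        with ((Y s (S d) - main_term (S d) s) + (j / Ns s - j / N) * Y s d
              + j / Ns s * Y s (S d) * Y s d + j / N * (Y s d - main_term d s)
              + (j / N * main_term d s - (main_term (S d) (S s) - main_term (S d) s)))
        by ring.
      assert (B1 := shift_term_bound s d Hst Hd).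
      assert (B2 := product_term_bound s d Hst Hd).
      assert (B3 := lower_error_term_bound s d Hst Hd (IH ltac:(lia) s ltac:(lia))).
      assert (B4 := main_term_defect_bound d s Hst Hd).
      eapply Rle_trans; [apply Rabs_triang|].
      eapply Rle_trans; [apply Rplus_le_compat_r, Rabs_4|].
      pose proof (err_scale_nonneg (S d)); pose proof (fine_const_nonneg k tau c tau_nonneg d).
      assert (0 <= INR s * G (S d) * err_scale (S d)).
      { apply Rmult_le_pos; [apply Rmult_le_pos; [apply pos_INR | apply (fine_const_nonneg k tau c tau_nonneg)] | lra]. }
      rewrite S_INR. cbn [fine_const] in *. fold j in B1, B2, B3, B4 |- *. nra.
Qed.

Lemma Y_error d : (m + d <= k)%nat ->
  Rabs (Y t d - main_term d t)
  <= tau * G k * (powerRZ U (Z.of_nat d - 1) / N ^ d * M).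
Proof.
  intros Hd. eapply Rle_trans; [apply (Y_fine d Hd t (Nat.le_refl t))|].
  assert (HGd : G d <= G k) by (apply (fine_const_mono k tau c tau_nonneg); lia).
  pose proof (fine_const_nonneg k tau c tau_nonneg d); pose proof (err_scale_nonneg d).
  assert (0 <= INR t) by apply pos_INR.
  destruct d as [|d].
  - simpl fine_const. rewrite Rmult_0_r, Rmult_0_l.
    assert (0 < powerRZ U (Z.of_nat 0 - 1)) by (apply powerRZ_lt; lra).
    pose proof (fine_const_nonneg k tau c tau_nonneg k).
    simpl pow. unfold Rdiv. rewrite Rinv_1, Rmult_1_r. 
    apply Rmult_le_pos; [nra|]. apply Rmult_le_pos; lra.
  - replace (Z.of_nat (S d) - 1)%Z with (Z.of_nat d) by lia.
    rewrite <- pow_powerRZ.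
    apply Rle_trans with (tau * U * G k * err_scale (S d)).
    + apply Rmult_le_compat_r; [lra|]. apply Rmult_le_compat; lra.
    + right. unfold err_scale, x. unfold Rdiv. rewrite Rpow_mult_distr. cbn [pow].
      rewrite pow_inv. field. split; [apply pow_nonzero|]; lra.
Qed.
End Recursion.

Lemma lam_iter_base k r n un t lam s : lam_iter k r n un t lam s (k - r + 1) = lam.
Proof. destruct s; cbn [lam_iter]; rewrite Nat.eqb_refl; reflexivity. Qed.

Lemma lam_iter_init k r n un t lam j : (k - r + 1 < j)%nat ->
  lam_iter k r n un t lam 0 j = 0.
Proof.
  intros H. cbn [lam_iter].
  rewrite (proj2 (Nat.eqb_neq _ _)), (proj2 (Nat.ltb_lt _ _)) by lia. reflexivity.
Qed.

Lemma lam_iter_succ k r n un t lam s j : (k - r + 1 < j)%nat ->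
  lam_iter k r n un t lam (S s) j
  = lam_iter k r n un t lam s j
    + ln (1 - INR j / Nval n un (t - s)
          + INR j / Nval n un (t - s) * exp (lam_iter k r n un t lam s (j - 1))).
Proof.
  intros H. cbn [lam_iter].
  rewrite (proj2 (Nat.eqb_neq _ _)), (proj2 (Nat.ltb_lt _ _)) by lia. reflexivity.
Qed.

Lemma Nval_bounds (n un t s : nat) (tau : R) : (s < t)%nat ->
  INR t <= tau * INR un -> (1 + tau) * INR un <= INR n / 2 ->
  INR n / 2 <= Nval n un (t - s) /\ Nval n un (t - s) <= INR n
  /\ INR n - Nval n un (t - s) <= (1 + tau) * INR un.
Proof.
  intros Hs Ht Hn. unfold Nval. rewrite minus_INR by lia.
  pose proof (pos_INR un); pose proof (pos_INR s).
  assert (INR s + 1 <= INR t) by (rewrite <- S_INR; apply le_INR; lia).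
  lra.
Qed.

Lemma exp_lam_iter_succ (k r n un t s d : nat) (tau : R) : (s < t)%nat ->
  (k - r + 1 + S d <= k)%nat -> INR t <= tau * INR un ->
  (1 + tau) * INR un <= INR n / 2 -> 2 * INR k <= INR n -> forall lam,
  exp (lam_iter k r n un t lam (S s) (k - r + 1 + S d)) - 1
  = exp (lam_iter k r n un t lam s (k - r + 1 + S d)) - 1
    + INR (k - r + 1 + S d) / Nval n un (t - s)
      * (1 + (exp (lam_iter k r n un t lam s (k - r + 1 + S d)) - 1))
      * (exp (lam_iter k r n un t lam s (k - r + 1 + d)) - 1).
Proof.
  intros Hs Hd Ht Hn Hk lam.
  destruct (Nval_bounds n un t s tau Hs Ht Hn) as [N1 [N2 N3]].
  set (q := INR (k - r + 1 + S d) / Nval n un (t - s)).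
  assert (Hq : 0 <= q <= 1).
  { assert (0 <= INR (k - r + 1 + S d) <= INR k)
      by (split; [apply pos_INR | apply le_INR; lia]).
    assert (1 <= INR k) by (apply (le_INR 1); lia).
    unfold q. split.
    - apply Rmult_le_pos; [lra | left; apply Rinv_0_lt_compat; lra].
    - apply Rmult_le_reg_r with (Nval n un (t - s)); [lra|].
      unfold Rdiv. rewrite Rmult_assoc, Rinv_l by lra. lra. }
  rewrite lam_iter_succ by lia. fold q.
  replace (k - r + 1 + S d - 1)%nat with (k - r + 1 + d)%nat by lia.
  rewrite exp_add_ln_mix by exact Hq. ring.
Qed.

(* [INR u * threshold k tau c <= INR n] packages the smallness conditions
   (1 + tau) u <= n / 2, 2 k <= n, u <= n and 4 k tau A_k u <= n. *)
Definition threshold (k : nat) (tau c : R) : R :=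
  2 * (1 + tau) + 2 * INR k + 4 * INR k * tau * crude_const k tau c k + 1.

Lemma exp_lam_iter_error (k r n un t j : nat) (lam tau : R) :
  0 < tau -> 1 <= INR un -> INR un * threshold k tau (exp lam - 1) <= INR n ->
  INR t <= tau * INR un -> (k - r + 1 <= j)%nat -> (j <= k)%nat ->
  Rabs (exp (lam_iter k r n un t lam t j)
        - (1 + C j (k - r + 1)
               * (INR t ^ (j - (k - r + 1)) / INR n ^ (j - (k - r + 1)))
               * (exp lam - 1)))
  <= tau * fine_const k tau (exp lam - 1) k
     * (powerRZ (INR un) (Z.of_nat (j - (k - r + 1)) - 1) / INR n ^ (j - (k - r + 1))
        * Rmax 1 (INR un ^ 2 / INR n)).
Proof.
  intros Htau HU Hthr Ht Hj1 Hj2.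
  set (m := (k - r + 1)%nat) in *. set (c := exp lam - 1) in *.
  set (U := INR un) in *. set (N := INR n) in *.
  pose proof (pos_INR k).
  assert (0 <= 4 * INR k * tau * crude_const k tau c k)
    by (pose proof (crude_const_pos k tau c (Rlt_le _ _ Htau) k); apply Rmult_le_pos; nra).
  unfold threshold in Hthr.
  set (W := 4 * INR k * tau * crude_const k tau c k) in *.
  assert (Hhalf : (1 + tau) * U <= N / 2) by nra.
  assert (H2k : 2 * INR k <= N) by nra.
  assert (HUN : U <= N) by nra.
  assert (Hsmall : W * U <= N) by nra.
  destruct (Nat.le_exists_sub m j Hj1) as [d [-> _]].
  rewrite Nat.add_sub, (Nat.add_comm d m).
  replace (exp (lam_iter k r n un t lam t (m + d)) - (1 + C (m + d) m * (INR t ^ d / N ^ d) * c))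
    with ((exp (lam_iter k r n un t lam t (m + d)) - 1) - main_term m c N d t)
    by (unfold main_term; unfold Rdiv; rewrite Rpow_mult_distr, pow_inv; ring).
  apply (Y_error k m t tau c U N (fun s d => exp (lam_iter k r n un t lam s (m + d)) - 1)
           (fun s => Nval n un (t - s))); try lia; try lra.
  - intros s Hs. exact (Nval_bounds n un t s tau Hs Ht Hhalf).
  - intros s. cbn beta. rewrite Nat.add_0_r. unfold m. rewrite lam_iter_base. reflexivity.
  - intros d'. cbn beta. rewrite lam_iter_init by (unfold m; lia). rewrite exp_0. ring.
  - intros s d' Hs Hd'. exact (exp_lam_iter_succ k r n un t s d' tau Hs Hd' Ht Hhalf H2k lam).
  - exact Hsmall.
Qed.

Lemma eventually_sublinear (u : nat -> nat) (D : R) : 0 < D ->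
  (forall M : R, exists N0 : nat, forall n : nat, (n >= N0)%nat -> INR (u n) >= M) ->
  Un_cv (fun n => INR (u n) / INR n) 0 ->
  exists N0 : nat, forall n : nat, (n >= N0)%nat -> 1 <= INR (u n) /\ INR (u n) * D <= INR n.
Proof.
  intros HD Hu Hcv.
  destruct (Hu 1) as [N1 HN1].
  destruct (Hcv (/ D) ltac:(apply Rinv_0_lt_compat; lra)) as [N2 HN2].
  exists (S (max N1 N2)). intros n Hn.
  specialize (HN1 n ltac:(lia)). specialize (HN2 n ltac:(lia)).
  assert (Hn1 : 1 <= INR n) by (apply (le_INR 1); lia).
  split; [lra|].
  unfold R_dist in HN2. rewrite Rminus_0_r, Rabs_right in HN2
    by (apply Rle_ge, Rmult_le_pos; [apply pos_INR | left; apply Rinv_0_lt_compat; lra]).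
  apply Rmult_lt_compat_r with (r := D * INR n) in HN2; [|nra].
  replace (INR (u n) / INR n * (D * INR n)) with (INR (u n) * D) in HN2 by (field; lra).
  replace (/ D * (D * INR n)) with (INR n) in HN2 by (field; lra).
  lra.
Qed.

Theorem mainTheorem10 :
  forall (k r : nat) (lam tau : R),
    (2 <= r)%nat -> (r <= k)%nat -> 0 < tau ->
    exists K : R, 0 <= K /\
    forall (u t : nat -> nat),
      (forall M : R, exists N0 : nat, forall n : nat, (n >= N0)%nat -> INR (u n) >= M) ->
      Un_cv (fun n => INR (u n) / INR n) 0 ->
      (forall n : nat, INR (t n) <= tau * INR (u n)) ->
      exists N0 : nat, forall n : nat, (n >= N0)%nat ->
        forall j : nat, (k - r + 1 <= j)%nat -> (j <= k)%nat ->
          Rabs (exp (lam_iter k r n (u n) (t n) lam (t n) j)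
                - (1 + Binomial.C j (k - r + 1)
                       * (INR (t n) ^ (j - (k - r + 1)) / INR n ^ (j - (k - r + 1)))
                       * (exp lam - 1)))
          <= K * (powerRZ (INR (u n)) (Z.of_nat (j - (k - r + 1)) - 1)
                  / INR n ^ (j - (k - r + 1))
                  * Rmax 1 (INR (u n) ^ 2 / INR n)).
Proof.
  intros k r lam tau _ _ Htau.
  set (c := exp lam - 1).
  exists (tau * fine_const k tau c k). split.
  { apply Rmult_le_pos; [lra | apply fine_const_nonneg; lra]. }
  intros u t Hu Hcv Ht.
  assert (Hthr : 0 < threshold k tau c).
  { unfold threshold. pose proof (pos_INR k).
    pose proof (crude_const_pos k tau c (Rlt_le _ _ Htau) k).
    assert (0 <= 4 * INR k * tau * crude_const k tau c k) by (apply Rmult_le_pos; nra).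
    lra. }
  destruct (eventually_sublinear u (threshold k tau c) Hthr Hu Hcv) as [N0 HN0].
  exists N0. intros n Hn j Hj1 Hj2.
  destruct (HN0 n Hn) as [HU HUn].
  exact (exp_lam_iter_error k r n (u n) (t n) j lam tau Htau HU HUn (Ht n) Hj1 Hj2).
Qed.
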